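(* Let $X$ be a $p\times 1$ random vector with finite moments up to the fourth order and invertible covariance matrix $\Sigma$, let $X_1,\dots,X_n$ be independent samples of $X$, let $\Omega$ be the normalized inverse covariance matrix of $X$ with eigenvalues $\lambda_1,\dots,\lambda_p$, and let $\hat\Omega$ be the sample normalized inverse covariance matrix. Assume that all expectations involved exist and that $\mathrm{E}[\hat\Omega]=\Omega$. For $\rho\in\mathbb{R}$ put $\Omega^*=(1-\rho)\hat\Omega+\rho I_p$. Then the value $\rho^*$ of $\rho$ minimizing $\mathrm{E}\big[\|\Omega^*-\Omega\|_F^2\big]$ is \[ \rho^*=\frac{\mathrm{tr}(\Sigma_{\hat\Omega})}{\mathrm{tr}(\Sigma_{\hat\Omega})+\mathrm{tr}(\Omega^2)-p}=\frac{\mathrm{tr}(\Sigma_{\hat\Omega})}{\mathrm{tr}(\Sigma_{\hat\Omega})+\sum_{i=1}^p\lambda_i^2-p}, \] where $\Sigma_{\hat\Omega}$ is the $p^2\times p^2$ covariance matrix of $\mathrm{vec}(\hat\Omega)$.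
   Context: For a random vector $X$ with covariance $\Sigma$ (invertible), $P=\Sigma^{-1}$, $P_d$ is the diagonal matrix with the diagonal entries of $P$, and the normalized inverse covariance matrix is $\Omega=P_d^{-1/2}PP_d^{-1/2}$. Given samples $X_1,\dots,X_n$, $\hat\Sigma=\frac1n\sum_{i=1}^n(X_i-\bar X)(X_i-\bar X)^T$ (assumed nonsingular), $\hat P=\hat\Sigma^{-1}$, $\hat P_d$ its diagonal part, and $\hat\Omega=\hat P_d^{-1/2}\hat P\hat P_d^{-1/2}$. $\mathrm{vec}(A)$ stacks the columns of $A$ into one vector. For a $p\times p$ matrix $A$, $\|A\|_F^2=\mathrm{tr}(A^TA)/p$ (scaled squared Frobenius norm). *)

From HB Require Import structures.
From mathcomp Require Import all_boot all_order all_algebra.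
From mathcomp Require Import all_classical all_reals all_analysis.
Set Implicit Arguments. Unset Strict Implicit. Unset Printing Implicit Defensive.
Import Order.TTheory GRing.Theory Num.Theory.
Local Open Scope ring_scope.
Local Open Scope classical_set_scope.

(* column-stacking vectorization vec(A) *)
Definition vecmx (R : Type) (p : nat) (A : 'M[R]_p) : 'cV[R]_(p * p) :=
  (mxvec A^T)^T.

Definition diag_invsqrt (R : rcfType) (p : nat) (M : 'M[R]_p) : 'M[R]_p :=
  diag_mx (\row_i (Num.sqrt (M i i))^-1).

Definition normalize (R : rcfType) (p : nat) (M : 'M[R]_p) : 'M[R]_p :=
  diag_invsqrt M *m M *m diag_invsqrt M.

Definition norm_inv_cov (R : rcfType) (p : nat) (S : 'M[R]_p) : 'M[R]_p :=
  normalize (invmx S).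

Definition frob2 (R : fieldType) (p : nat) (A : 'M[R]_p) : R :=
  \tr (A^T *m A) / p%:R.

Definition covmx d (T : measurableType d) (R : realType) (P : probability T R)
  (m : nat) (Y : 'I_m -> T -> R) : 'M[R]_m :=
  \matrix_(i, j) fine (covariance P (Y i) (Y j)).

Definition sample_mean (R : fieldType) (n p : nat) (x : 'I_n -> 'cV[R]_p) : 'cV[R]_p :=
  n%:R^-1 *: \sum_(i < n) x i.

Definition sample_cov (R : fieldType) (n p : nat) (x : 'I_n -> 'cV[R]_p) : 'M[R]_p :=
  n%:R^-1 *: \sum_(i < n) ((x i - sample_mean x) *m (x i - sample_mean x)^T).

(* independence of random vectors X_1..X_n (product rule on measurable rectangles,
   which generate the product sigma-algebra of R^p) *)
Definition independent_vecs d (T : measurableType d) (R : realType) (P : probability T R)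
  (n p : nat) (Xs : 'I_n -> T -> 'cV[R]_p) : Prop :=
  forall B : 'I_n -> 'I_p -> set R, (forall i k, measurable (B i k)) ->
    P [set w | forall i k, B i k (Xs i w k ord0)] =
    (\prod_(i < n) P [set w | forall k, B i k (Xs i w k ord0)])%E.

Definition same_distribution d (T : measurableType d) (R : realType) (P : probability T R)
  (p : nat) (X Y : T -> 'cV[R]_p) : Prop :=
  forall B : 'I_p -> set R, (forall k, measurable (B k)) ->
    P [set w | forall k, B k (Y w k ord0)] = P [set w | forall k, B k (X w k ord0)].

From HB Require Import structures.
From mathcomp Require Import all_boot all_order all_algebra.
From mathcomp Require Import all_classical all_reals all_analysis.
From mathcomp Require Import measurable_realfun ring.
Set Implicit Arguments. Unset Strict Implicit. Unset Printing Implicit Defensive.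
Import Order.TTheory GRing.Theory Num.Theory.
Local Open Scope ring_scope.
Local Open Scope classical_set_scope.

(* Unbiasedness kills the cross term in E ||(1 - rho) Omegahat + rho I - Omega||_F^2, leaving the
   bias-variance split ((1 - rho)^2 a + rho^2 b) / p with a = tr(Sigma_Omegahat) and
   b = tr((I - Omega)^2); this quadratic in rho has the unique minimiser a / (a + b).
   Omegahat is the normalisation of the inverse of a Gram matrix, whose diagonal is positive, so
   Omegahat has unit diagonal; taking expectations so does Omega, whence b = tr(Omega^2) - p.
   Finally tr(Omega^2) = sum lambda_i^2 because chi_{A^2}(x^2) = (-1)^p chi_A(x) chi_A(-x)
   determines the characteristic polynomial of A^2 from that of A. *)

Section CharPolySquare.
Variable R : comNzRingType.

Lemma char_poly_sqrmx n (M : 'M[R]_n) :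
  char_poly (M *m M) \Po 'X^2 =
  char_poly M * ((-1) ^+ n * (char_poly M \Po - 'X)).
Proof.
pose Mp := map_mx polyC M.
have compC q (N : 'M[R]_n) : map_mx (comp_poly q) (map_mx polyC N) = map_mx polyC N.
  by apply/matrixP => i j; rewrite !mxE comp_polyC.
have sqrE : map_mx (comp_poly 'X^2) (char_poly_mx (M *m M)) =
            ('X%:M - Mp) *m ('X%:M + Mp).
  rewrite /char_poly_mx map_mxB map_scalar_mx /= comp_polyX compC map_mxM.
  rewrite mulmxDr !mulmxBl -scalar_mxM -expr2 [Mp *m _%:M]scalar_mxC.
  by rewrite addrA subrK.
have oppE : map_mx (comp_poly (- 'X)) (char_poly_mx M) = (-1) *: ('X%:M + Mp).
  rewrite /char_poly_mx map_mxB map_scalar_mx /= comp_polyX compC.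
  rewrite scaleN1r opprD; congr (_ - _).
  by apply/matrixP => i j; rewrite !mxE mulNrn.
rewrite /char_poly -!det_map_mx sqrE oppE det_mulmx detZ.
congr (_ * _); by rewrite mulrA -expr2 -exprM mulnC exprM sqrrN !expr1n mul1r.
Qed.

Lemma comp_polyXn_inj k : (0 < k)%N -> injective (comp_poly ('X^k : {poly R})).
Proof.
move=> k_gt0 p q /(congr1 (fun r : {poly R} => r`_(_ * k))) eq_coef.
apply/polyP => i; have := eq_coef i.
by rewrite /= !coef_comp_poly_Xn // dvdn_mull // mulnK.
Qed.

Lemma mxtrace_sqr_eigen n (A : 'M[R]_n) (lam : 'I_n -> R) :
  char_poly A = \prod_(i < n) ('X - (lam i)%:P) ->
  \tr (A *m A) = \sum_(i < n) lam i ^+ 2.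
Proof.
case: n A lam => [|n] A lam charA; first by rewrite /mxtrace !big_ord0.
(* A and diag(lam) share their characteristic polynomial, hence so do their squares. *)
pose D := diag_mx (\row_i lam i).
have charD : char_poly D = char_poly A.
  rewrite charA char_poly_trig ?diag_mx_is_trig //.
  by apply: eq_bigr => i _; rewrite !mxE eqxx mulr1n.
have : char_poly (A *m A) = char_poly (D *m D).
  by apply: (comp_polyXn_inj (isT : 0 < 2)%N); rewrite /= !char_poly_sqrmx charD.
move/(congr1 (fun r : {poly R} => r`_n.+1.-1)).
rewrite !char_poly_trace // => /oppr_inj ->.
rewrite mul_mx_diag /mxtrace; apply: eq_bigr => i _.
by rewrite !mxE eqxx mulr1n expr2.
Qed.

End CharPolySquare.

Section GramInverse.
Variables (R : realDomainType) (p : nat) (I : finType) (s : R) (z : I -> 'cV[R]_p).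
Hypothesis s_ge0 : 0 <= s.

Let S := s *: \sum_l z l *m (z l)^T.
Let coord (y : 'cV[R]_p) l := ((z l)^T *m y) 0 0.

Lemma gram_mulmx (y : 'cV[R]_p) : S *m y = s *: \sum_l coord y l *: z l.
Proof.
rewrite /S -scalemxAl mulmx_suml; congr (_ *: _); apply: eq_bigr => l _.
rewrite -mulmxA; apply/matrixP => a b.
by rewrite (ord1 b) !mxE big_ord1 !mxE mulrC /coord mxE.
Qed.

Lemma gram_form (y : 'cV[R]_p) : (y^T *m (S *m y)) 0 0 = s * \sum_l coord y l ^+ 2.
Proof.
rewrite gram_mulmx -scalemxAr mulmx_sumr mxE summxE; congr (_ * _).
apply: eq_bigr => l _; rewrite -scalemxAr mxE expr2; congr (_ * _).
by rewrite /coord -{1}(trmxK (z l)) -trmx_mul mxE.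
Qed.

Lemma gram_form_eq0 (y : 'cV[R]_p) : (y^T *m (S *m y)) 0 0 = 0 -> S *m y = 0.
Proof.
rewrite gram_form gram_mulmx => /eqP; rewrite mulf_eq0 => /orP[/eqP->|].
  by rewrite scale0r.
rewrite psumr_eq0 => [/allP coord0|l _]; last exact: sqr_ge0.
rewrite big1 ?scaler0 // => l _.
by have := coord0 l (mem_index_enum l); rewrite sqrf_eq0 => /eqP ->; rewrite scale0r.
Qed.

(* (invmx S) i i is the quadratic form of S at y = invmx S e_i, a sum of squares vanishing
   only if S y = e_i is zero. *)
Lemma invmx_gram_diag_gt0 i : S \in unitmx -> 0 < invmx S i i.
Proof.
move=> S_unit; pose e : 'cV[R]_p := delta_mx i 0; pose y := invmx S *m e.
have Sy : S *m y = e by rewrite /y mulmxA mulmxV // mul1mx.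
have formE : (y^T *m (S *m y)) 0 0 = invmx S i i.
  by rewrite Sy /y trmx_mul trmx_delta -rowE -colE !mxE.
have e_neq0 : e != 0.
  by apply/eqP => /matrixP /(_ i 0); rewrite !mxE !eqxx => /eqP; rewrite oner_eq0.
have form_ge0 : 0 <= (y^T *m (S *m y)) 0 0.
  by rewrite gram_form mulr_ge0 // sumr_ge0 // => l _; exact: sqr_ge0.
rewrite -formE lt_def form_ge0 andbT.
by apply: contra e_neq0 => /eqP /gram_form_eq0; rewrite Sy => ->.
Qed.

End GramInverse.

Lemma sample_cov_invmx_diag_gt0 (R : realFieldType) n p (x : 'I_n -> 'cV[R]_p) i :
  sample_cov x \in unitmx -> 0 < invmx (sample_cov x) i i.
Proof. by apply: invmx_gram_diag_gt0; rewrite invr_ge0 ler0n. Qed.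

Section Normalize.
Variables (R : rcfType) (p : nat).
Implicit Types M : 'M[R]_p.

Lemma normalizeE M i j :
  normalize M i j = (Num.sqrt (M i i))^-1 * M i j * (Num.sqrt (M j j))^-1.
Proof. by rewrite /normalize /diag_invsqrt mul_mx_diag mxE mul_diag_mx !mxE. Qed.

Lemma normalize_diag M i : 0 < M i i -> normalize M i i = 1.
Proof.
move=> M_ii_gt0; rewrite normalizeE mulrAC -invfM -expr2 sqr_sqrtr ?ltW //.
by rewrite mulVf // gt_eqF.
Qed.

Lemma trmx_normalize M : M^T = M -> (normalize M)^T = normalize M.
Proof.
move=> M_sym; apply/matrixP => i j; rewrite mxE !normalizeE.
have -> : M j i = M i j by rewrite -[in LHS]M_sym mxE.
by rewrite mulrC mulrA mulrAC.
Qed.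

Lemma trmx_norm_inv_cov M : M^T = M -> (norm_inv_cov M)^T = norm_inv_cov M.
Proof. by move=> M_sym; rewrite trmx_normalize // trmx_inv M_sym. Qed.

Lemma norm_inv_cov_sample_diag n (x : 'I_n -> 'cV[R]_p) i :
  sample_cov x \in unitmx -> norm_inv_cov (sample_cov x) i i = 1.
Proof. by move=> S_unit; rewrite normalize_diag // sample_cov_invmx_diag_gt0. Qed.

End Normalize.

Lemma mxtrace_dim0 (R : pzRingType) m (A : 'M[R]_m) : m = 0%N -> \tr A = 0.
Proof. by move=> m0; rewrite /mxtrace big1 // => i; have := ltn_ord i; rewrite {2}m0. Qed.

Lemma mxtrace_trmx_mulmx (R : comNzRingType) p (A : 'M[R]_p) :
  \tr (A^T *m A) = \sum_i \sum_j A i j ^+ 2.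
Proof.
rewrite /mxtrace exchange_big; apply: eq_bigr => j _.
by rewrite mxE; apply: eq_bigr => i _; rewrite mxE expr2.
Qed.

Lemma mxtrace_trmx_mulmx_ge0 (R : realDomainType) p (A : 'M[R]_p) :
  0 <= \tr (A^T *m A).
Proof.
by rewrite mxtrace_trmx_mulmx; do 2!apply: sumr_ge0 => ? _; exact: sqr_ge0.
Qed.

Lemma mxtrace_sqr_1B (R : comNzRingType) p (A : 'M[R]_p) :
  A^T = A -> (forall i, A i i = 1) ->
  \tr ((1%:M - A)^T *m (1%:M - A)) = \tr (A *m A) - p%:R.
Proof.
move=> A_sym A_diag.
have trA : \tr A = p%:R.
  by rewrite /mxtrace (eq_bigr _ (fun i _ => A_diag i)) sumr_const card_ord.
rewrite [(1%:M - A)^T]raddfB /= trmx1 A_sym mulmxBl !mulmxBr mul1mx mulmx1.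
by rewrite !raddfB /= mul1mx mxtrace1 trA addrA subrr add0r opprK addrC.
Qed.

Section SecondMoments.
Context d (T : measurableType d) (R : realType) (P : probability T R).

Lemma Lfun2_sqr_integrable (Y : T -> R) : measurable_fun setT Y ->
  P.-integrable setT (fun w => (Y w ^+ 2)%:E) -> Y \in Lfun P 2%:E.
Proof.
move=> mY iY; rewrite inE; apply/andP; split; first by rewrite inE.
rewrite inE /= /finite_norm unlock /Lnorm; apply: poweR_lty.
move/integrableP: iY => [_ +]; apply: le_lt_trans.
apply: ge0_le_integral => //.
- by move=> x _; rewrite lee_fin powR_ge0.
- apply/measurable_EFinP.
  apply/(@measurableT_comp _ _ _ _ _ _ (fun x : R => x `^ 2)%R) => //.
  exact/measurableT_comp.
- apply/measurable_EFinP; apply: measurableT_comp => //.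
  exact: measurable_funX.
- by move=> t _ /=; rewrite lee_fin (@powR_mulrn _ _ 2) // normrX.
Qed.

Lemma Lfun1_sum (I : finType) (F : I -> T -> R) : (forall i, F i \in Lfun P 1) ->
  (fun w => \sum_i F i w) \in Lfun P 1.
Proof.
move=> F1; have -> : (fun w => \sum_i F i w) = \sum_i F i.
  by apply/funext => w; rewrite fct_sumE.
exact: rpred_sum.
Qed.

Lemma expectation_fsum (I : finType) (F : I -> T -> R) : (forall i, F i \in Lfun P 1) ->
  ('E_P[fun w => (\sum_i F i w)%R] = \sum_i 'E_P[F i])%E.
Proof.
move=> F1; rewrite unlock; under eq_integral do rewrite -sumEFin.
by rewrite integral_sum // => i; apply/Lfun1_integrable.
Qed.

Lemma Lfun2_affine (Y : T -> R) (a c b : R) : Y \in Lfun P 2%:E ->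
  (fun w => a * (Y w - c) + b) \in Lfun P 2%:E.
Proof.
move=> Y2; have -> : (fun w => a * (Y w - c) + b) = a *: (Y - cst c) + cst b.
  by apply/funext => w.
apply: rpredD => [|h|h]; rewrite ?lee1n // ?Lfun_cst //.
by rewrite rpredZ // rpredB // Lfun_cst.
Qed.

Lemma expectation_sqr_affine (Y : T -> R) (a c b : R) :
  Y \in Lfun P 2%:E -> ('E_P[Y] = c%:E)%E ->
  ('E_P[fun w => ((a * (Y w - c) + b) ^+ 2)%R] =
   (a ^+ 2 * fine (covariance P Y Y) + b ^+ 2)%:E)%E.
Proof.
move=> Y2 EY; pose Z w := a * (Y w - c) + b.
have Z2 : Z \in Lfun P 2%:E := Lfun2_affine a c b Y2.
have Y1 : Y \in Lfun P 1 by apply: Lfun_subset12 Y2; rewrite fin_num_measure.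
have ZE : Z = (a \o* (Y \- cst c) \+ cst b)%R by apply/funext => w /=; rewrite mulrC.
have Yc2 : (Y \- cst c)%R \in Lfun P 2%:E.
  by rewrite rpredB ?lee1n //= => _; rewrite Lfun_cst.
have Yc1 : (Y \- cst c)%R \in Lfun P 1 by rewrite rpredB // Lfun_cst.
have EZ : ('E_P[Z] = b%:E)%E.
  rewrite ZE expectationD ?Lfun_cst ?Lfun_scale // expectationZl //.
  by rewrite expectationB ?Lfun_cst // EY !expectation_cst subee // mule0 add0e.
have VZ : variance P Z = ((a ^+ 2)%:E * covariance P Y Y)%E.
  rewrite ZE varianceD_cst_r; last by apply: Lfun_scale; rewrite ?ler1n.
  by rewrite varianceZ // varianceB_cst_r.
have cov_fin : covariance P Y Y \is a fin_num by exact: variance_fin_num.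
have Z1 : (Z ^+ 2)%R \in Lfun P 1 by exact: Lfun2_mul_Lfun1.
have sqr_fin := expectation_fin_num Z1.
have varZ := varianceE Z2.
rewrite VZ EZ -(fineK cov_fin) -(fineK sqr_fin) -EFinM -EFin_expe -EFinB in varZ.
by case: varZ => varZ; rewrite -(fineK sqr_fin) varZ subrK.
Qed.

Lemma trmx_covmx m (Y : 'I_m -> T -> R) : (covmx P Y)^T = covmx P Y.
Proof. by apply/matrixP => i j; rewrite !mxE covarianceC. Qed.

Lemma mxtrace_covmx_ge0 m (Y : 'I_m -> T -> R) : 0 <= \tr (covmx P Y).
Proof. by apply: sumr_ge0 => i _; rewrite mxE; exact/fine_ge0/variance_ge0. Qed.

Lemma mxtrace_covmx_vecmx p (Y : T -> 'M[R]_p) :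
  \tr (covmx P (fun k w => vecmx (Y w) k ord0)) =
  \sum_i \sum_j fine (covariance P (fun w => Y w i j) (fun w => Y w i j)).
Proof.
rewrite /mxtrace (reindex (uncurry (@mxvec_index p p))) /=; last first.
  exact: curry_mxvec_bij.
rewrite exchange_big pair_big /=; apply: eq_bigr => -[i j] _ /=.
have vecE w : vecmx (Y w) (mxvec_index i j) ord0 = Y w j i.
  by rewrite /vecmx [LHS]mxE mxvecE mxE.
by rewrite mxE; under eq_fun do rewrite vecE.
Qed.

Lemma expectation_frob2_shrink p (Y : T -> 'M[R]_p) (M C : 'M[R]_p) (rho : R) :
  (forall i j, (fun w => Y w i j) \in Lfun P 2%:E) ->
  (forall i j, 'E_P[fun w => Y w i j] = (M i j)%:E)%E ->
  ('E_P[fun w => frob2 ((1 - rho) *: Y w + rho *: C - M)] =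
   (((1 - rho) ^+ 2 * \tr (covmx P (fun k w => vecmx (Y w) k ord0)) +
     rho ^+ 2 * \tr ((C - M)^T *m (C - M))) / p%:R)%:E)%E.
Proof.
move=> Y2 EY.
pose g i j w := ((1 - rho) * (Y w i j - M i j) + rho * (C - M) i j) ^+ 2.
have g1 i j : g i j \in Lfun P 1 by apply: Lfun2_mul_Lfun1; exact: Lfun2_affine.
have -> : (fun w => frob2 ((1 - rho) *: Y w + rho *: C - M)) =
          (p%:R^-1 \o* (fun w => \sum_i \sum_j g i j w))%R.
  apply/funext => w; rewrite /frob2 mxtrace_trmx_mulmx /=; congr (_ * _).
  by apply: eq_bigr => i _; apply: eq_bigr => j _; rewrite /g !mxE; congr (_ ^+ 2); ring.
rewrite expectationZl; last by apply: Lfun1_sum => i; exact: Lfun1_sum.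
rewrite expectation_fsum; last by move=> i; exact: Lfun1_sum.
under eq_bigr do rewrite expectation_fsum //.
under eq_bigr do under eq_bigr do rewrite /g expectation_sqr_affine //.
under eq_bigr do rewrite sumEFin.
rewrite sumEFin -EFinM mulrC mxtrace_covmx_vecmx mxtrace_trmx_mulmx !mulr_sumr.
rewrite -big_split; congr (_ / _)%:E; apply: eq_bigr => i _.
by rewrite !mulr_sumr -big_split; apply: eq_bigr => j _; rewrite exprMn.
Qed.

End SecondMoments.

Definition shrinkage_risk (R : pzRingType) (a b rho : R) : R :=
  (1 - rho) ^+ 2 * a + rho ^+ 2 * b.

Section ShrinkageRisk.
Variables (R : realFieldType) (a b : R).
Hypotheses (a_ge0 : 0 <= a) (b_ge0 : 0 <= b) (ab_neq0 : a + b != 0).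

Lemma shrinkage_riskE rho :
  shrinkage_risk a b rho = (a + b) * (rho - a / (a + b)) ^+ 2 + a * b / (a + b).
Proof. by rewrite /shrinkage_risk; field. Qed.

Let ab_gt0 : 0 < a + b. Proof. by rewrite lt_def ab_neq0 addr_ge0. Qed.

Lemma shrinkage_risk_min rho :
  shrinkage_risk a b (a / (a + b)) <= shrinkage_risk a b rho.
Proof.
rewrite !shrinkage_riskE subrr expr0n mulr0 add0r lerDr.
by rewrite mulr_ge0 ?sqr_ge0 ?ltW.
Qed.

Lemma shrinkage_risk_argmin rho :
  (forall r, shrinkage_risk a b rho <= shrinkage_risk a b r) -> rho = a / (a + b).
Proof.
move=> /(_ (a / (a + b))); rewrite !shrinkage_riskE subrr expr0n mulr0 add0r.
rewrite gerDr pmulr_rle0 // => sqr_le0.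
by apply/eqP; rewrite -subr_eq0 -sqrf_eq0 eq_le sqr_le0 sqr_ge0.
Qed.

End ShrinkageRisk.

Theorem theorem2 (d : measure_display) (T : measurableType d) (R : realType)
  (P : probability T R) (p n : nat)
  (X : T -> 'cV[R]_p) (Xs : 'I_n -> T -> 'cV[R]_p) (lambda : 'I_p -> R)
  (* X is a random vector with finite fourth moments *)
  (hXmeas : forall k, measurable_fun setT (fun w => X w k ord0))
  (hX4 : forall k, P.-integrable setT (fun w => ((X w k ord0) ^+ 4)%:E))
  (* its covariance matrix is invertible *)
  (hSigma : covmx P (fun k w => X w k ord0) \in unitmx)
  (* X_1,...,X_n are independent samples of X *)
  (hXsmeas : forall i k, measurable_fun setT (fun w => Xs i w k ord0))
  (hind : independent_vecs P Xs)
  (hdist : forall i, same_distribution P X (Xs i))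
  (* the sample covariance matrix is nonsingular *)
  (hSigmahat : forall w, sample_cov (fun i => Xs i w) \in unitmx)
  (* lambda_1..lambda_p are the eigenvalues of Omega (with multiplicity) *)
  (hlambda : char_poly (norm_inv_cov (covmx P (fun k w => X w k ord0)))
             = \prod_(i < p) ('X - (lambda i)%:P))
  (* all expectations involved exist *)
  (hOmeas : forall i j, measurable_fun setT
      (fun w => norm_inv_cov (sample_cov (fun l => Xs l w)) i j))
  (hO2 : forall i j, P.-integrable setT
      (fun w => ((norm_inv_cov (sample_cov (fun l => Xs l w)) i j) ^+ 2)%:E))
  (* E[Omegahat] = Omega *)
  (hunb : forall i j, ('E_P[fun w => norm_inv_cov (sample_cov (fun l => Xs l w)) i j])%E
          = (norm_inv_cov (covmx P (fun k w => X w k ord0)) i j)%:E)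
  (* the formula for rho* is well defined *)
  (hden : let Omega := norm_inv_cov (covmx P (fun k w => X w k ord0)) in
          let trS := \tr (covmx P (fun k w =>
                       vecmx (norm_inv_cov (sample_cov (fun l => Xs l w))) k ord0)) in
          trS + \tr (Omega *m Omega) - p%:R != 0) :
  let Omega := norm_inv_cov (covmx P (fun k w => X w k ord0)) in
  let Omegahat := fun w => norm_inv_cov (sample_cov (fun l => Xs l w)) in
  let trS := \tr (covmx P (fun k w => vecmx (Omegahat w) k ord0)) in
  let J := fun rho : R =>
    ('E_P[fun w => frob2 ((1 - rho) *: Omegahat w + rho *: 1%:M - Omega)])%E in
  let rhostar := trS / (trS + \tr (Omega *m Omega) - p%:R) in
  (forall rho, (J rhostar <= J rho)%E) /\
  (forall rho, (forall r, (J rho <= J r)%E) -> rho = rhostar) /\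
  rhostar = trS / (trS + \sum_(i < p) lambda i ^+ 2 - p%:R).
Proof.
move=> Omega Omegahat trS J rhostar.
have Omegahat_L2 i j := Lfun2_sqr_integrable (hOmeas i j) (hO2 i j).
have Omega_diag i : Omega i i = 1.
  have := hunb i i; under eq_fun do rewrite norm_inv_cov_sample_diag //.
  by rewrite expectation_cst => -[].
have Omega_sym : Omega^T = Omega by rewrite trmx_norm_inv_cov // trmx_covmx.
pose b := \tr (Omega *m Omega) - p%:R.
have J_E rho : J rho = ((shrinkage_risk trS b rho) / p%:R)%:E.
  by rewrite /J expectation_frob2_shrink // mxtrace_sqr_1B.
have trS_ge0 : 0 <= trS := mxtrace_covmx_ge0 _ _.
have b_ge0 : 0 <= b by rewrite /b -mxtrace_sqr_1B // mxtrace_trmx_mulmx_ge0.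
have ab_neq0 : trS + b != 0 by rewrite /b addrA.
have p_gt0 : (0 < p)%N.
  rewrite lt0n; apply: contra ab_neq0 => /eqP p0.
  by rewrite /trS /b !mxtrace_dim0 ?p0 // subr0 addr0.
have J_le rho r : (J rho <= J r)%E = (shrinkage_risk trS b rho <= shrinkage_risk trS b r).
  by rewrite !J_E lee_fin ler_pM2r // invr_gt0 ltr0n.
have rhostarE : rhostar = trS / (trS + b) by rewrite /rhostar /b addrA.
split; [|split].
- by move=> rho; rewrite J_le rhostarE shrinkage_risk_min.
- move=> rho J_min; rewrite rhostarE.
  by apply: shrinkage_risk_argmin => // r; rewrite -J_le.
- by rewrite /rhostar (mxtrace_sqr_eigen hlambda).
Qed.
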